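(* Let $n\ge 4$ and $1\le k<\frac{n}{2}$ be integers and let $D$ be the diameter of $B(n,k)$. If $n\neq 2k+1$ then $D=2k+2$; if $n=2k+1$ then $D=2k+1$.
   Context: For integers $n\ge 4$ and $1\le k<\frac n2$, let $[n]=\{1,\dots,n\}$. The graph $B(n,k)$ has vertex set $V=\{v\subset[n] : |v|\in\{k,k+1\}\}$, and two vertices $v,w$ are adjacent iff $v\subset w$ or $w\subset v$. *)

From mathcomp Require Import all_boot.
Set Implicit Arguments. Unset Strict Implicit. Unset Printing Implicit Defensive.

Definition isVB (n k : nat) (A : {set 'I_n}) : bool :=
  (#|A| == k) || (#|A| == k.+1).

Definition adjB (n k : nat) (A B : {set 'I_n}) : bool :=
  [&& isVB k A, isVB k B & (A \proper B) || (B \proper A)].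

Definition within (n k : nat) (u v : {set 'I_n}) (m : nat) : Prop :=
  exists p : seq {set 'I_n}, [/\ path (@adjB n k) u p, last u p = v & size p <= m].

(* D is the diameter of B(n,k): D is the least m such that every pair of
   vertices is at distance at most m (i.e. the maximum pairwise distance). *)
Definition is_diameter (n k D : nat) : Prop :=
  forall m : nat,
    (forall u v : {set 'I_n}, isVB k u -> isVB k v -> within k u v m) <-> D <= m.

(* The distance in B(n,k) is the size of the symmetric difference [u Δ v]:
   an edge adds or removes one element, so it changes [|u Δ v|] by exactly
   one, and from any vertex [u <> v] there is an edge towards [v] (add an
   element of [v \ u] if [|u| = k], remove one of [u \ v] if [|u| = k+1]).
   Hence the diameter is the largest [|u Δ v| = |u| + |v| - 2|u ∩ v|] over
   vertices: [2k+2], realised by two disjoint (k+1)-sets, unless [n = 2k+1],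
   where two (k+1)-sets must meet and the maximum [2k+1] is realised by a
   k-set and its complement. *)

From mathcomp Require Import all_boot.
From mathcomp Require Import zify.
Set Implicit Arguments. Unset Strict Implicit.

Lemma exists_subset_card (T : finType) (B : {set T}) m :
  m <= #|B| -> exists2 A : {set T}, A \subset B & #|A| = m.
Proof.
rewrite -bin_gt0 -cards_draws => /card_gt0P [A].
by rewrite inE => /andP [sAB /eqP cardA]; exists A.
Qed.

Lemma exists_disjoint_sets_card (T : finType) a b :
  a + b <= #|T| ->
  exists u v : {set T}, [/\ #|u| = a, #|v| = b & [disjoint u & v]].
Proof.
move=> leabT; have [|u _ cardu] := @exists_subset_card T setT a.
  by rewrite cardsT; lia.
have [|v svCu cardv] := @exists_subset_card T (~: u) b.
  by have := cardsC u; lia.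
by exists u, v; rewrite disjoint_sym disjoints_subset.
Qed.

Section SymmetricDifference.
Variable T : finType.
Implicit Types u v w : {set T}.

Definition sdist u v := #|u :\: v| + #|v :\: u|.

Lemma sdist_eq0 u v : (sdist u v == 0) = (u == v).
Proof. by rewrite addn_eq0 !cards_eq0 !setD_eq0 eqEsubset. Qed.

Lemma sdist_cardsI u v : sdist u v + (#|u :&: v|).*2 = #|u| + #|v|.
Proof.
rewrite /sdist !cardsD [v :&: u]setIC.
have := subset_leq_card (subsetIl u v); have := subset_leq_card (subsetIr u v).
lia.
Qed.

Lemma sdist_disjoint u v : [disjoint u & v] -> sdist u v = #|u| + #|v|.
Proof.
by move=> duv; rewrite /sdist (setDidPl duv) (setDidPl _) // disjoint_sym.
Qed.

Lemma sdist_sym u v : sdist u v = sdist v u.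
Proof. exact: addnC. Qed.

Lemma sdist_sub u v : u \subset v -> sdist u v = #|v| - #|u|.
Proof.
move=> suv; rewrite /sdist (cardsDS suv).
by move: suv; rewrite -setD_eq0 => /eqP ->; rewrite cards0.
Qed.

Lemma cardsD_triangle u v w : #|u :\: w| <= #|u :\: v| + #|v :\: w|.
Proof.
apply: leq_trans (leq_card_setU _ _); apply: subset_leq_card.
by apply/subsetP => z; rewrite !inE; case: (z \in u) (z \in v) (z \in w) => [] [] [].
Qed.

Lemma sdist_triangle u v w : sdist u w <= sdist u v + sdist v w.
Proof.
by rewrite /sdist; have := cardsD_triangle u v w; have := cardsD_triangle w v u; lia.
Qed.

Lemma sdist_setU1 u v y : y \in v :\: u -> (sdist (y |: u) v).+1 = sdist u v.
Proof.
rewrite /sdist inE => /andP [yu yv].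
have -> : (y |: u) :\: v = u :\: v.
  by apply/setP => z; rewrite !inE; case: eqP => // ->; rewrite yv.
have -> : v :\: (y |: u) = (v :\: u) :\ y.
  by apply/setP => z; rewrite !inE negb_or andbA.
by rewrite [#|v :\: u|](cardsD1 y) inE yu yv; lia.
Qed.

Lemma sdist_setD1 u v x : x \in u :\: v -> (sdist (u :\ x) v).+1 = sdist u v.
Proof.
rewrite /sdist inE => /andP [xv xu].
have -> : v :\: (u :\ x) = v :\: u.
  by apply/setP => z; rewrite !inE; case: eqP => [->|] /=; rewrite ?(negbTE xv) ?andbF.
have -> : (u :\ x) :\: v = (u :\: v) :\ x.
  by apply/setP => z; rewrite !inE andbCA.
by rewrite [#|u :\: v|](cardsD1 x) inE xu xv; lia.
Qed.

Lemma exists_setD_card u v : #|u| <= #|v| -> u != v -> exists x, x \in v :\: u.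
Proof.
move=> leuv neuv; apply/set0Pn; rewrite setD_eq0.
by apply: contra neuv => svu; rewrite eq_sym eqEcard svu.
Qed.

End SymmetricDifference.

Section Distance.
Variables n k : nat.
Notation S := {set 'I_n}.
Implicit Types u v w : S.

Lemma adjB_sdist u w : adjB k u w -> sdist u w = 1.
Proof.
case/and3P; rewrite /isVB => vu vw.
case/orP => /[dup] /proper_card + /proper_sub; [|rewrite sdist_sym] => lt sub;
  rewrite sdist_sub //; move: lt;
  by case/orP: vu => /eqP ->; case/orP: vw => /eqP ->; lia.
Qed.

Lemma within_sdist_le u v m : within k u v m -> sdist u v <= m.
Proof.
case=> p [+ <- +]; elim: p u m => [|w p IHp] u m /=; first by rewrite /sdist setDv cards0.
case/andP => adj_uw pw; case: m => // m; rewrite ltnS => lepm.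
by rewrite (leq_trans (sdist_triangle u w _)) // (adjB_sdist adj_uw) ltnS IHp.
Qed.

Lemma within_refl u m : within k u u m.
Proof. by exists [::]. Qed.

Lemma within_cons u w v m : adjB k u w -> within k w v m -> within k u v m.+1.
Proof. by move=> adj_uw [p [pw <- lepm]]; exists (w :: p); rewrite /= adj_uw. Qed.

Lemma within_leq u v m m' : m <= m' -> within k u v m -> within k u v m'.
Proof. by move=> lemm' [p [pu <- lepm]]; exists p; split=> //; apply: leq_trans lemm'. Qed.

Lemma adjB_setU1 u y : #|u| = k -> y \notin u -> adjB k u (y |: u).
Proof.
move=> cardu yu; have cardyu : #|y |: u| = k.+1 by rewrite cardsU1 yu cardu.
by rewrite /adjB /isVB cardu cardyu !eqxx properEcard subsetUr cardyu cardu ltnSn !orbT.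
Qed.

Lemma adjB_setD1 u x : #|u| = k.+1 -> x \in u -> adjB k u (u :\ x).
Proof.
move=> cardu xu; have cardux : #|u :\ x| = k by have := cardsD1 x u; rewrite xu cardu => -[].
by rewrite /adjB /isVB cardu cardux !eqxx (properD1 xu) !orbT.
Qed.

Lemma adjB_sdist_step u v : isVB k u -> isVB k v -> u != v ->
  exists2 w, adjB k u w & (sdist w v).+1 = sdist u v.
Proof.
rewrite /isVB => /orP [] /eqP cardu vv neuv.
- have [|y yvu] := exists_setD_card _ neuv; first by case/orP: vv => /eqP; lia.
  exists (y |: u); last exact: sdist_setU1.
  by apply: adjB_setU1 => //; move: yvu; rewrite inE => /andP [].
- rewrite eq_sym in neuv.
  have [|x xuv] := exists_setD_card _ neuv; first by case/orP: vv => /eqP; lia.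
  exists (u :\ x); last exact: sdist_setD1.
  by apply: adjB_setD1 => //; move: xuv; rewrite inE => /andP [].
Qed.

Lemma within_sdist u v : isVB k u -> isVB k v -> within k u v (sdist u v).
Proof.
move=> vu vv; suff: forall m u, isVB k u -> sdist u v = m -> within k u v m by apply.
elim=> [|m IHm] {vu}u vu duv.
  by move/eqP: duv; rewrite sdist_eq0 => /eqP ->; apply: within_refl.
have neuv : u != v by rewrite -sdist_eq0 duv.
have [w adj_uw] := adjB_sdist_step vu vv neuv; rewrite duv => -[dwv].
have /and3P [_ vw _] := adj_uw; exact: within_cons adj_uw (IHm w vw dwv).
Qed.

End Distance.

Definition diamB n k := if n == k.*2.+1 then k.*2.+1 else k.*2.+2.

Section Diameter.
Variables n k : nat.
Notation S := {set 'I_n}.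

Lemma sdist_isVB_le (u v : S) : isVB k u -> isVB k v -> sdist u v <= diamB n k.
Proof.
rewrite /isVB /diamB => vu vv.
have := sdist_cardsI u v; have := cardsUI u v; have := max_card (u :|: v).
rewrite card_ord; case: eqP => En;
  by case/orP: vu => /eqP ->; case/orP: vv => /eqP ->; lia.
Qed.

Lemma exists_isVB_sdist : k.*2 < n ->
  exists u v : S, [/\ isVB k u, isVB k v & sdist u v = diamB n k].
Proof.
rewrite /diamB => ltkn; case: eqP => [eq_n | ne_n].
- have [|u [v [cardu cardv duv]]] := @exists_disjoint_sets_card 'I_n k k.+1.
  + by rewrite card_ord; lia.
  by exists u, v; rewrite /isVB sdist_disjoint // cardu cardv !eqxx orbT addnS -addnn.
- have [|u [v [cardu cardv duv]]] := @exists_disjoint_sets_card 'I_n k.+1 k.+1.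
  + by rewrite card_ord; lia.
  by exists u, v; rewrite /isVB sdist_disjoint // cardu cardv !eqxx orbT addnS addSn -addnn.
Qed.

Lemma is_diameterB : k.*2 < n -> is_diameter n k (diamB n k).
Proof.
move=> ltkn m; split=> [within_m | le_diam_m u v vu vv].
- have [u [v [vu vv <-]]] := exists_isVB_sdist ltkn.
  exact: within_sdist_le (within_m u v vu vv).
- exact: within_leq (leq_trans (sdist_isVB_le vu vv) le_diam_m) (within_sdist vu vv).
Qed.

End Diameter.

Lemma is_diameter_uniq n k D D' : is_diameter n k D -> is_diameter n k D' -> D = D'.
Proof.
move=> hD hD'; apply/eqP; rewrite eqn_leq.
by apply/andP; split; [apply/hD/hD' | apply/hD'/hD].
Qed.

Theorem corollary3p4 (n k D : nat) :
  4 <= n -> 1 <= k -> k.*2 < n -> is_diameter n k D ->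
  (n != k.*2.+1 -> D = k.*2.+2) /\ (n = k.*2.+1 -> D = k.*2.+1).
Proof.
move=> _ _ ltkn hD; rewrite (is_diameter_uniq hD (is_diameterB ltkn)) /diamB.
by split=> [/negbTE -> | ->]; rewrite ?eqxx.
Qed.
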